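(* Let $K$ be a field, $m\ge2$, $d_1,\ldots,d_m$ positive integers, and $I_2(D)\subset K[x_1,\ldots,x_m,y_1,\ldots,y_m]$ the ideal generated by the $2$-minors of $D=\begin{pmatrix}x_1^{d_1}&\cdots&x_m^{d_m}\\ y_1^{d_1}&\cdots&y_m^{d_m}\end{pmatrix}$. Then $I_2(D)$ is generated by its indispensable binomials.
   Context: A binomial $B\in I_2(D)$ is indispensable if every system of binomial generators of $I_2(D)$ contains $B$ or $-B$. *)

From HB Require Import structures.
From mathcomp Require Import all_boot all_algebra.
From mathcomp Require Import mpoly.

Set Implicit Arguments.
Unset Strict Implicit.
Unset Printing Implicit Defensive.

Import GRing.Theory.
Local Open Scope ring_scope.

Definition in_ideal_gen (R : comNzRingType) (S : R -> Prop) (p : R) : Prop :=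
  exists (n : nat) (r g : 'I_n -> R),
    (forall i, S (g i)) /\ p = \sum_(i < n) r i * g i.

Definition binomial (K : fieldType) (n : nat) (p : {mpoly K[n]}) : Prop :=
  exists u v : 'X_{1..n}, u != v /\ p = 'X_[u] - 'X_[v].

Definition xvar (K : fieldType) (m : nat) (i : 'I_m) : {mpoly K[m + m]} :=
  'X_(lshift m i).
Definition yvar (K : fieldType) (m : nat) (i : 'I_m) : {mpoly K[m + m]} :=
  'X_(rshift m i).

Definition two_minor (K : fieldType) (m : nat) (d : 'I_m -> nat)
    (p : {mpoly K[m + m]}) : Prop :=
  exists i j : 'I_m, (i < j)%N /\
    p = @xvar K m i ^+ d i * @yvar K m j ^+ d j - @xvar K m j ^+ d j * @yvar K m i ^+ d i.

Definition I2D (K : fieldType) (m : nat) (d : 'I_m -> nat) (p : {mpoly K[m + m]})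
  : Prop := in_ideal_gen (@two_minor K m d) p.

Definition binomial_generating_system (K : fieldType) (m : nat) (d : 'I_m -> nat)
    (G : {mpoly K[m + m]} -> Prop) : Prop :=
  (forall g, G g -> binomial g) /\
  (forall p, in_ideal_gen G p <-> I2D d p).

Definition indispensable (K : fieldType) (m : nat) (d : 'I_m -> nat)
    (B : {mpoly K[m + m]}) : Prop :=
  binomial B /\ I2D d B /\
  forall G, binomial_generating_system d G -> G B \/ G (- B).

(* Write f_ij = x_i^{d_i} y_j^{d_j} - x_j^{d_j} y_i^{d_i}.  Every element of
   I_2(D) has zero coefficient at each proper divisor of x_i^{d_i} y_j^{d_j},
   and opposite coefficients at x_i^{d_i} y_j^{d_j} and x_j^{d_j} y_i^{d_i}:
   both properties hold for monomial multiples of the minors and are linear.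
   Hence the only binomials of I_2(D) having a term that divides
   x_i^{d_i} y_j^{d_j} are +f_ij and -f_ij.  Reading off the coefficient of
   x_i^{d_i} y_j^{d_j} in an expression of f_ij over a binomial generating
   system shows that one of its generators is +f_ij or -f_ij, so each 2-minor
   is indispensable and the indispensable binomials generate I_2(D). *)

From HB Require Import structures.
From mathcomp Require Import all_boot all_algebra.
From mathcomp Require Import mpoly.

Set Implicit Arguments.
Unset Strict Implicit.
Unset Printing Implicit Defensive.

Import GRing.Theory.
Local Open Scope ring_scope.

Section IdealGeneration.
Variables (R : comNzRingType) (S : R -> Prop).

Lemma in_ideal_gen_sub x : S x -> in_ideal_gen S x.
Proof.
by move=> Sx; exists 1%N, (fun=> 1), (fun=> x); rewrite big_ord1 mul1r.
Qed.

Lemma in_ideal_gen_ind (P : R -> Prop) :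
  P 0 -> (forall x y, P x -> P y -> P (x + y)) ->
  (forall r g, S g -> P (r * g)) ->
  forall p, in_ideal_gen S p -> P p.
Proof.
move=> P0 PD PM _ [n [r [g [Sg ->]]]].
by apply: (big_ind P) => // i _; apply: PM.
Qed.

Lemma in_ideal_gen0 : in_ideal_gen S 0.
Proof. by exists 0%N, (fun=> 0), (fun=> 0); rewrite big_ord0; split=> // -[]. Qed.

Lemma in_ideal_genD p q :
  in_ideal_gen S p -> in_ideal_gen S q -> in_ideal_gen S (p + q).
Proof.
move=> [n1 [r1 [g1 [Sg1 ->]]]] [n2 [r2 [g2 [Sg2 ->]]]].
pose glue T (f1 : 'I_n1 -> T) (f2 : 'I_n2 -> T) (k : 'I_(n1 + n2)) :=
  match split k with inl a => f1 a | inr b => f2 b end.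
exists (n1 + n2)%N, (glue _ r1 r2), (glue _ g1 g2); split.
  by move=> k; rewrite /glue; case: split.
rewrite big_split_ord /glue; congr (_ + _); apply: eq_bigr => i _.
  by rewrite -[lshift _ _]/(unsplit (inl _ i)) unsplitK.
by rewrite -[rshift _ _]/(unsplit (inr _ i)) unsplitK.
Qed.

Lemma in_ideal_genMl r p : in_ideal_gen S p -> in_ideal_gen S (r * p).
Proof.
move=> [n [r1 [g [Sg ->]]]]; exists n, (fun i => r * r1 i), g; split => //.
by rewrite mulr_sumr; apply: eq_bigr => i _; rewrite mulrA.
Qed.

End IdealGeneration.

Lemma in_ideal_gen_trans (R : comNzRingType) (S T : R -> Prop) :
  (forall x, S x -> in_ideal_gen T x) ->
  forall p, in_ideal_gen S p -> in_ideal_gen T p.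
Proof.
move=> ST; apply: (in_ideal_gen_ind (P := in_ideal_gen T)).
- exact: in_ideal_gen0.
- exact: in_ideal_genD.
- by move=> r g /ST; apply: in_ideal_genMl.
Qed.

Section ScalarVanishing.
Variables (K : fieldType) (n : nat) (L : {scalar {mpoly K[n]}}).

Lemma scalar_mulr_eq0 g :
  (forall w, L ('X_[w] * g) = 0) -> forall r, L (r * g) = 0.
Proof.
move=> Lg r; rewrite (mpolyE r) mulr_suml linear_sum big1 // => w _.
by rewrite -scalerAl linearZ /= Lg mulr0.
Qed.

Lemma scalar_ideal_eq0 (S : {mpoly K[n]} -> Prop) :
  (forall w g, S g -> L ('X_[w] * g) = 0) ->
  forall p, in_ideal_gen S p -> L p = 0.
Proof.
move=> LS; apply: (in_ideal_gen_ind (P := fun p => L p = 0)).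
- exact: linear0.
- by move=> x y Lx Ly; rewrite linearD Lx Ly addr0.
- by move=> r g Sg; apply: scalar_mulr_eq0 => w; apply: LS.
Qed.

End ScalarVanishing.

Lemma mcoeffMX_eq0 (K : fieldType) n (r : {mpoly K[n]}) (u z : 'X_{1..n}) :
  ~~ (u <= z)%MM -> (r * 'X_[u])@_z = 0.
Proof.
move=> uNz; apply: (@scalar_mulr_eq0 _ _ (mcoeff z)) => w /=.
rewrite -mpolyXD mcoeffX; case: eqP => // wu_z.
by move: uNz; rewrite -wu_z lem_addl.
Qed.

Section MinorExponents.
Variables (m : nat) (d : 'I_m -> nat).
Hypothesis d_gt0 : forall i, (0 < d i)%N.

Definition minor_mnm (i j : 'I_m) : 'X_{1..m + m} :=
  (U_(lshift m i) *+ d i + U_(rshift m j) *+ d j)%MM.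

Lemma minor_mnmE i j k :
  minor_mnm i j k = ((lshift m i == k) * d i + (rshift m j == k) * d j)%N.
Proof. by rewrite mnmDE !mulmnE !mnm1E. Qed.

Lemma minor_mnm_le i j i' j' :
  (minor_mnm i j <= minor_mnm i' j')%MM -> i = i' /\ j = j'.
Proof.
move=> /mnm_lepP le_ij; split.
  move: (le_ij (lshift m i)); rewrite !minor_mnmE !eq_rlshift eq_lshift eqxx.
  by case: eqP => [/lshift_inj //|_]; rewrite mul1n addn0 leqNgt d_gt0.
move: (le_ij (rshift m j)); rewrite !minor_mnmE !eq_lrshift eq_rshift eqxx.
by case: eqP => [/rshift_inj //|_]; rewrite mul1n leqNgt d_gt0.
Qed.

Lemma minor_mnm_addl_le w i j i' j' :
  (w + minor_mnm i j <= minor_mnm i' j')%MM -> [/\ w = 0%MM, i = i' & j = j'].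
Proof.
move=> le_wij; have [ii' jj'] : i = i' /\ j = j'.
  by apply: minor_mnm_le; apply: lepm_trans le_wij; rewrite lem_addl.
subst i' j'; split=> //; apply/mnmP => k; move/mnm_lepP/(_ k): le_wij.
by rewrite mnmDE mnm0E -[leqRHS]add0n leq_add2r leqn0 => /eqP.
Qed.

Lemma minor_mnm_addE w i j i' j' :
  (w + minor_mnm i j == minor_mnm i' j')%MM = [&& w == 0%MM, i == i' & j == j'].
Proof.
apply/eqP/and3P => [wij_eq | [/eqP -> /eqP -> /eqP ->]]; last exact: add0m.
have : (w + minor_mnm i j <= minor_mnm i' j')%MM by rewrite wij_eq lepm_refl.
by case/minor_mnm_addl_le => -> -> ->.
Qed.

Lemma minor_mnm_neq i j : i != j -> minor_mnm i j != minor_mnm j i.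
Proof.
move=> neq_ij; apply/eqP => eq_mnm.
have [eq_ij _] : i = j /\ j = i by apply: minor_mnm_le; rewrite eq_mnm lepm_refl.
by rewrite eq_ij eqxx in neq_ij.
Qed.

End MinorExponents.

Section TwoMinors.
Variables (K : fieldType) (m : nat) (d : 'I_m -> nat).
Hypothesis d_gt0 : forall i, (0 < d i)%N.

Definition minor_poly (i j : 'I_m) : {mpoly K[m + m]} :=
  'X_[minor_mnm d i j] - 'X_[minor_mnm d j i].

Lemma minor_polyE i j :
  @xvar K m i ^+ d i * @yvar K m j ^+ d j - @xvar K m j ^+ d j * @yvar K m i ^+ d i
  = minor_poly i j.
Proof. by rewrite /xvar /yvar !mpolyXn -!mpolyXD. Qed.

Lemma I2D_scalar_eq0 (L : {scalar {mpoly K[m + m]}}) :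
  (forall w i j, L ('X_[w] * minor_poly i j) = 0) ->
  forall p, I2D d p -> L p = 0.
Proof.
move=> L_minor; apply: scalar_ideal_eq0 => w _ [i [j [_ ->]]].
by rewrite minor_polyE.
Qed.

Variables (i j : 'I_m).
Hypothesis neq_ij : i != j.

Lemma I2D_mcoeff_eq0 (p : {mpoly K[m + m]}) z :
  I2D d p -> (z <= minor_mnm d i j)%MM -> z != minor_mnm d i j -> p@_z = 0.
Proof.
move=> p_I2D z_le z_neq; apply: (I2D_scalar_eq0 (L := mcoeff z)) p_I2D => w a b /=.
have divides_neq a' b' : (w + minor_mnm d a' b' == z)%MM = false.
  apply: contraNF z_neq => /eqP z_eq; move: z_le; rewrite -z_eq.
  by case/(minor_mnm_addl_le d_gt0) => -> -> ->; rewrite add0m.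
by rewrite mulrBr -!mpolyXD mcoeffB !mcoeffX !divides_neq subrr.
Qed.

Lemma I2D_mcoeff_pair (p : {mpoly K[m + m]}) :
  I2D d p -> p@_(minor_mnm d i j) + p@_(minor_mnm d j i) = 0.
Proof.
apply: (I2D_scalar_eq0 (L := mcoeff (minor_mnm d i j) \+ mcoeff (minor_mnm d j i))).
move=> w a b /=; rewrite mulrBr -!mpolyXD !mcoeffB !mcoeffX !minor_mnm_addE //.
by rewrite [(b == j) && _]andbC [(b == i) && _]andbC -[X in _ + X]opprB subrr.
Qed.

Lemma I2D_binomial_minor (u v : 'X_{1..m + m}) :
  u != v -> (u <= minor_mnm d i j)%MM ->
  I2D d ('X_[u] - 'X_[v] : {mpoly K[m + m]}) ->
  'X_[u] - 'X_[v] = minor_poly i j.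
Proof.
move=> neq_uv u_le uv_I2D.
have u_eq : u = minor_mnm d i j.
  apply/eqP; apply: contraT => u_neq; move: (I2D_mcoeff_eq0 uv_I2D u_le u_neq).
  by rewrite mcoeffB !mcoeffX eqxx eq_sym (negbTE neq_uv) subr0 => /eqP; rewrite oner_eq0.
subst u; move: (I2D_mcoeff_pair uv_I2D).
rewrite !mcoeffB !mcoeffX eqxx (negbTE (minor_mnm_neq d_gt0 neq_ij)).
rewrite eq_sym (negbTE neq_uv) subr0 sub0r /minor_poly.
by case: eqP => [-> // | _]; rewrite subr0 => /eqP; rewrite oner_eq0.
Qed.

Lemma generating_system_minor (G : {mpoly K[m + m]} -> Prop) :
  I2D d (minor_poly i j) -> binomial_generating_system d G ->
  G (minor_poly i j) \/ G (- minor_poly i j).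
Proof.
move=> minor_I2D [G_bin G_gen]; set z := minor_mnm d i j.
have [n [r [g [Gg minor_eq]]]] := (G_gen _).2 minor_I2D.
have /existsP [k rg_z] : [exists k, (r k * g k)@_z != 0].
  apply: contraT; rewrite negb_exists => /forallP rg_eq0.
  have : (minor_poly i j)@_z == 0.
    by rewrite minor_eq raddf_sum big1 // => k _; apply/eqP/negbNE/rg_eq0.
  rewrite mcoeffB !mcoeffX eqxx /z [minor_mnm d j i == _]eq_sym.
  by rewrite (negbTE (minor_mnm_neq d_gt0 neq_ij)) subr0 oner_eq0.
have [u [v [neq_uv g_eq]]] := G_bin _ (Gg k).
have g_I2D : I2D d (g k) by apply/G_gen/in_ideal_gen_sub.
have [u_le | uNle] := boolP (u <= z)%MM.
  by left; rewrite -(I2D_binomial_minor neq_uv u_le) -?g_eq.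
have [v_le | vNle] := boolP (v <= z)%MM.
  have vu_I2D : I2D d ('X_[v] - 'X_[u] : {mpoly K[m + m]}).
    by rewrite -opprB -g_eq -mulN1r; apply: in_ideal_genMl.
  by right; rewrite -(I2D_binomial_minor _ v_le vu_I2D) 1?eq_sym // opprB -g_eq.
by move: rg_z; rewrite g_eq mulrBr mcoeffB !mcoeffMX_eq0 // subrr eqxx.
Qed.

End TwoMinors.

Lemma two_minor_indispensable (K : fieldType) (m : nat) (d : 'I_m -> nat)
    (p : {mpoly K[m + m]}) :
  (forall i, (0 < d i)%N) -> two_minor d p -> indispensable d p.
Proof.
move=> d_gt0 p_minor; have p_I2D : I2D d p := in_ideal_gen_sub p_minor.
have [i [j [lt_ij p_eq]]] := p_minor; rewrite minor_polyE in p_eq; subst p.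
have neq_ij : i != j by apply: contraTneq lt_ij => ->; rewrite ltnn.
split; last by split=> // G; apply: generating_system_minor.
by exists (minor_mnm d i j), (minor_mnm d j i); rewrite minor_mnm_neq.
Qed.

Theorem proposition4p6 (K : fieldType) (m : nat) (d : 'I_m -> nat) :
  (2 <= m)%N -> (forall i, (0 < d i)%N) ->
  forall p : {mpoly K[m + m]},
    I2D d p <-> in_ideal_gen (indispensable d) p.
Proof.
move=> _ d_gt0 p; split; apply: in_ideal_gen_trans => x.
  by move=> x_minor; apply/in_ideal_gen_sub/two_minor_indispensable.
by case=> _ [].
Qed.
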